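(* Let $k$ be a field. If $F$ and $G$ are strictly additive (abelian group)-valued $k$-functors and $\pi\colon F\to G$ is an epimorphism in the category of (abelian group)-valued $k$-functors, then $\pi$ splits in that category.
   Context: A $k$-functor is a functor from commutative $k$-algebras to abelian groups. Epimorphisms are objectwise surjective morphisms. $\mathbb{G}_a^\alpha$ ($\alpha\in\{0,1,\dots,\infty\}$) is $B\mapsto\bigoplus_{i=1}^\alpha B$. A functor is strictly additive if it is isomorphic to some $\mathbb{G}_a^\alpha$. *)

From HB Require Import structures.
From mathcomp Require Import all_boot all_order all_algebra.
Unset Printing Implicit Defensive.
Import GRing.Theory.
Local Open Scope ring_scope.

(* Functoriality is stated pointwise. *)
Record kFunctor (k : fieldType) := KFunctor {
  fobj : comAlgType k -> zmodType;
  fmap : forall (A B : comAlgType k), {lrmorphism A -> B} -> fobj A -> fobj B;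
  fmapD : forall (A B : comAlgType k) (f : {lrmorphism A -> B}) (x y : fobj A),
      fmap A B f (x + y) = fmap A B f x + fmap A B f y;
  fmap_id : forall (A : comAlgType k) (f : {lrmorphism A -> A}),
      (forall a, f a = a) -> forall x, fmap A A f x = x;
  fmap_comp : forall (A B C : comAlgType k) (f : {lrmorphism A -> B}) (g : {lrmorphism B -> C})
      (h : {lrmorphism A -> C}),
      (forall a, h a = g (f a)) -> forall x, fmap A C h x = fmap B C g (fmap A B f x)
}.
Arguments fmap {k} _ {A B} _ _.
Arguments fobj {k} _ _.

Record natTrans {k : fieldType} (F G : kFunctor k) := NatTrans {
  nt :> forall A : comAlgType k, fobj F A -> fobj G A;
  ntD : forall (A : comAlgType k) (x y : fobj F A), nt A (x + y) = nt A x + nt A y;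
  nt_nat : forall (A B : comAlgType k) (f : {lrmorphism A -> B}) (x : fobj F A),
      nt B (fmap F f x) = fmap G f (nt A x)
}.

Section Ga.
Variable k : fieldType.

Definition GaFin (n : nat) : kFunctor k.
refine (@KFunctor k (fun B => 'rV[B]_n : zmodType)
          (fun A B f v => map_mx f v) _ _ _).
- by move=> A B f x y; apply/matrixP => i j; rewrite !mxE rmorphD.
- by move=> A f hf x; apply/matrixP => i j; rewrite !mxE hf.
- by move=> A B C f g h hh x; apply/matrixP => i j; rewrite !mxE hh.
Defined.

(* G_a^infty: B |-> (+)_{i in N} B, represented by the additive group of
   B[X] (finitely supported coefficient sequences) *)
Definition GaInf : kFunctor k.
refine (@KFunctor k (fun B => {poly B} : zmodType)
          (fun A B f p => map_poly f p) _ _ _).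
- by move=> A B f x y; apply/polyP => i; rewrite !(coefD, coef_map) /= rmorphD.
- by move=> A f hf x; apply/polyP => i; rewrite coef_map /= hf.
- by move=> A B C f g h hh x; apply/polyP => i; rewrite !coef_map /= hh.
Defined.

(* alpha : option nat, with None standing for alpha = infinity *)
Definition Ga (alpha : option nat) : kFunctor k :=
  match alpha with Some n => GaFin n | None => GaInf end.
End Ga.

Definition strictly_additive {k : fieldType} (F : kFunctor k) : Prop :=
  exists (alpha : option nat) (phi : natTrans F (Ga k alpha))
         (psi : natTrans (Ga k alpha) F),
    (forall (A : comAlgType k) x, psi A (phi A x) = x) /\ (forall (A : comAlgType k) y, phi A (psi A y) = y).

Definition epimorphism {k : fieldType} {F G : kFunctor k} (pi : natTrans F G)
  : Prop := forall (A : comAlgType k) (y : fobj G A), exists x, pi A x = y.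

Definition splits {k : fieldType} {F G : kFunctor k} (pi : natTrans F G)
  : Prop := exists sigma : natTrans G F, forall (A : comAlgType k) (y : fobj G A), pi A (sigma A y) = y.

(* Both functors are isomorphic to powers of G_a, so they carry coordinates, and
   a morphism G_a -> F amounts to a primitive element w of F(k[X]), one with
   F(ev_(a+b)) w = F(ev_a) w + F(ev_b) w.  A section of pi is thus given by
   primitive preimages of the generic points e_j of G(k[X]).  Take any preimage
   of e_j and, in each of its coordinates, discard the monomials X^n whose
   exponent is not additive, i.e. with (X + 1)^n <> X^n + 1; the result is
   primitive.  Its image is still e_j: the coordinates of pi at the primitive
   points of F are additive polynomials, which only involve additive exponents,
   and as additive exponents are closed under products and under quotients by
   additive exponents, composing with an additive polynomial commutes with
   discarding the non-additive monomials. *)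

From HB Require Import structures.
From mathcomp Require Import all_boot all_order all_algebra.
From mathcomp Require Import zify.
Import GRing.Theory.
Local Open Scope ring_scope.

Section Evaluation.
Variables (k : fieldType) (A : comAlgType k) (a : A).

(* [horner_alg a] is linear only for the scaling [in_alg A \; *%R]; the copy
   [ev a] is declared linear for [*:%R], as the morphisms of k-algebras are. *)
Definition ev : {poly k} -> A := horner_alg a.
HB.instance Definition _ := GRing.RMorphism.copy ev (horner_alg a).

Fact ev_is_scalable : scalable ev.
Proof. by move=> c p; rewrite /ev linearZ /= mulr_algl. Qed.
HB.instance Definition _ :=
  GRing.isScalable.Build k {poly k} A *:%R ev ev_is_scalable.

Lemma evE p : ev p = \sum_(i < size p) p`_i *: a ^+ i.
Proof.
rewrite /ev /horner_alg /horner_morph (@horner_coef_wide _ (size p)).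
  by apply: eq_bigr => i _; rewrite coef_map /= mulr_algl.
exact: size_poly.
Qed.

Lemma evX : ev 'X = a.
Proof. exact: horner_algX. Qed.

End Evaluation.
Arguments ev {k A} a.

Lemma ev_comp_poly (k : fieldType) (p q : {poly k}) :
  ev (q : {poly k} : comAlgType k) p = p \Po q.
Proof. by rewrite evE comp_polyE. Qed.

Lemma rmorph_ev (k : fieldType) (A B : comAlgType k) (f : {lrmorphism A -> B})
    (a : A) (p : {poly k}) :
  f (ev a p) = ev (f a) p.
Proof.
rewrite !evE raddf_sum; apply: eq_bigr => i _.
rewrite -rmorphXn; exact: linearZ_LR.
Qed.

Section AdditiveExponent.
Variable k : fieldType.
Implicit Types (m n : nat).

Definition additive_exp n : bool :=
  (0 < n)%N && (('X + 1) ^+ n == 'X ^+ n + 1 :> {poly k}).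

Lemma coef_Xadd1_exp n i : (('X + 1) ^+ n : {poly k})`_i = 'C(n, i)%:R.
Proof.
rewrite exprD1n; under eq_bigr do rewrite -(scaler_nat (R := k)).
rewrite coef_sumMXn (eq_bigl (fun j : 'I_n.+1 => j == i :> nat)) //.
rewrite (big_ord1_eq _ (fun j => 'C(n, j)%:R : k)).
by case: ltnP => // /bin_small->.
Qed.

Lemma additive_expP n :
  reflect ((0 < n)%N /\ forall i, (0 < i < n)%N -> 'C(n, i)%:R = 0 :> k)
          (additive_exp n).
Proof.
apply: (iffP andP) => -[n_gt0 hn]; split=> //.
  move=> i /andP[i_gt0 lt_in]; move/eqP/polyP/(_ i): hn.
  by rewrite coef_Xadd1_exp coefD coefXn coef1 ltn_eqF // gtn_eqF // addr0.
apply/eqP/polyP => i; rewrite coef_Xadd1_exp coefD coefXn coef1.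
have [lt_ni|lt_in|<-] := ltngtP n i.
- by rewrite bin_small // (gtn_eqF (ltn_trans n_gt0 lt_ni)) add0r.
- case: (posnP i) => [->|i_gt0]; first by rewrite bin0 add0r.
  by rewrite hn ?i_gt0 // addr0.
- by rewrite binn (gtn_eqF n_gt0) addr0.
Qed.

Lemma additive_expD n (A : comAlgType k) (a b : A) :
  additive_exp n -> (a + b) ^+ n = a ^+ n + b ^+ n.
Proof.
case/additive_expP; case: n => [//|n] _ binom0.
rewrite exprDn big_ord_recl big_ord_recr /= big1 ?add0r.
  by rewrite subn0 expr0 mulr1 bin0 subnn expr0 mul1r binn.
move=> i _; rewrite -scaler_nat binom0 ?scale0r //.
by rewrite /bump /= add1n ltnS ltn_ord.
Qed.
Arguments additive_expD {n A} a b.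

Lemma additive_exp1 : additive_exp 1.
Proof. by rewrite /additive_exp !expr1 eqxx. Qed.

Lemma additive_expM m n :
  additive_exp m -> additive_exp n -> additive_exp (m * n).
Proof.
move=> am an; rewrite /additive_exp muln_gt0.
case/andP: (am) => -> _; case/andP: (an) => -> _ /=.
rewrite exprM (additive_expD _ _ am) expr1n.
by rewrite (additive_expD _ _ an) expr1n exprM.
Qed.

Lemma additive_expMl m n :
  additive_exp n -> additive_exp (m * n) = additive_exp m.
Proof.
move=> an; apply/idP/idP => [amn|/additive_expM->//].
case/andP: (amn); rewrite muln_gt0 => /andP[m_gt0 n_gt0] _.
rewrite /additive_exp m_gt0 /=.
set x := ('X + 1) ^+ m; set y := 'X ^+ m + 1 : {poly k}.
have xny : x ^+ n = y ^+ n.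
  rewrite /x /y -exprM (additive_expD _ _ amn).
  by rewrite (additive_expD _ _ an) !expr1n -exprM.
have oppyn : (- y) ^+ n = - y ^+ n.
  apply/eqP; rewrite -subr_eq0 opprK addrC -(additive_expD _ _ an) subrr.
  by rewrite expr0n gtn_eqF.
have : (x - y) ^+ n == 0 by rewrite (additive_expD _ _ an) oppyn xny subrr.
by rewrite expf_eq0 subr_eq0 => /andP[].
Qed.

End AdditiveExponent.
Arguments additive_expD {k n A} a b.

Section AdditivePart.
Variable k : fieldType.

Definition additive_part (p : {poly k}) : {poly k} :=
  \poly_(i < size p) (if additive_exp k i then p`_i else 0).

Lemma coef_additive_part p i :
  (additive_part p)`_i = if additive_exp k i then p`_i else 0.
Proof.
rewrite coef_poly; case: ltnP => // le_p_i.
by rewrite nth_default // if_same.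
Qed.

Fact additive_part_is_linear : linear additive_part.
Proof.
move=> c p q; apply/polyP => i.
rewrite coefD coefZ !coef_additive_part coefD coefZ.
by case: ifP; rewrite ?mulr0 ?addr0.
Qed.
HB.instance Definition _ := GRing.isLinear.Build k {poly k} {poly k} _
  additive_part additive_part_is_linear.

Lemma additive_part_monomial (c : k) n :
  additive_part (c *: 'X^n) = if additive_exp k n then c *: 'X^n else 0.
Proof.
apply/polyP => i; rewrite coef_additive_part coefZ coefXn.
have [->|ne_in] := eqVneq i n.
  by case: ifP; rewrite ?coef0 ?coefZ ?coefXn ?eqxx.
by case: ifP; case: ifP; rewrite ?coef0 ?coefZ ?coefXn ?(negbTE ne_in) ?mulr0.
Qed.

Lemma additive_partX : additive_part 'X = 'X.
Proof.
by have := additive_part_monomial 1 1; rewrite additive_exp1 !scale1r.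
Qed.

Lemma ev_additive_partD (A : comAlgType k) (a b : A) p :
  ev (a + b) (additive_part p) =
    ev a (additive_part p) + ev b (additive_part p).
Proof.
rewrite !evE -big_split; apply: eq_bigr => i _ /=.
rewrite coef_additive_part; case: ifP => [/(additive_expD a b)->|_].
  by rewrite scalerDr.
by rewrite !scale0r addr0.
Qed.

End AdditivePart.
Arguments additive_part {k} p.

Lemma eq_digits N r q r' q' : (r < N)%N -> (r' < N)%N ->
  (r + N * q == r' + N * q')%N = (r == r') && (q == q').
Proof.
move=> lt_rN lt_r'N; apply/eqP/andP => [e|[/eqP-> /eqP->]//].
have e_r : r = r'.
  have := congr1 (modn^~ N) e.
  by rewrite /= !(mulnC N) !(addnC _ (_ * N)) !modnMDl !modn_small.
split; apply/eqP => //; move: e; rewrite e_r => /addnI/eqP.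
by rewrite eqn_mul2l (gtn_eqF (leq_ltn_trans (leq0n r) lt_rN)) => /eqP.
Qed.

Section AdditivePolynomial.
Variable k : fieldType.
Implicit Types (g p q c : {poly k}).

Definition additive_poly g : Prop :=
  forall p q, g \Po (p + q) = (g \Po p) + (g \Po q).

Lemma additive_poly0 {g} : additive_poly g -> g \Po 0 = 0.
Proof. by move=> ag; apply: (addrI (g \Po 0)); rewrite -ag !addr0. Qed.

Lemma coef_XaddXn_exp N m r d : (m < N)%N -> (r < N)%N ->
  (('X + 'X^N) ^+ m : {poly k})`_(r + N * d) =
    if (m == r + d)%N then 'C(m, d)%:R else 0.
Proof.
move=> lt_mN lt_rN; rewrite exprDn.
under eq_bigr do rewrite -exprM -exprD -(scaler_nat (R := k)).
rewrite coef_sumMXn.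
under eq_bigl => j do
  rewrite eq_digits ?(leq_ltn_trans (leq_subr _ _) lt_mN) //.
rewrite (big_ord1_cond_eq _ (fun j => 'C(m, j)%:R : k) (fun j => m - j == r)%N).
rewrite ltnS.
case: (leqP d m) => [le_dm|lt_md]; first by rewrite -(eqn_add2r d) subnK.
by rewrite (ltn_eqF (leq_trans lt_md (leq_addl r d))).
Qed.

Lemma additive_poly_exp {g n} :
  additive_poly g -> g`_n != 0 -> additive_exp k n.
Proof.
move=> ag gn_neq0; have lt_n_g : (n < size g)%N.
  by rewrite ltnNge; apply: contra gn_neq0 => /(nth_default 0)->.
case: (posnP n) => [n0|n_gt0].
  have := congr1 (coefp 0) (additive_poly0 ag).
  rewrite /= comp_poly0r coefC coef0 eqxx -n0 => gn0.
  by rewrite gn0 eqxx in gn_neq0.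
apply/additive_expP; split => // i /andP[i_gt0 lt_in].
(* Kronecker substitution: in g(X + X^N) = g(X) + g(X^N) with N = size g,
   the coefficient of X^(n - i + N i) is g_n C(n, i) on the left and 0 on
   the right. *)
set N := size g; set T := (n - i + N * i)%N.
have lt_niN : (n - i < N)%N by rewrite (leq_ltn_trans (leq_subr _ _)).
have ndvd_NT : ~~ (N %| T)%N.
  rewrite /T (dvdn_addl _ (dvdn_mulr _ (dvdnn N))).
  apply: contraL lt_niN => /(dvdn_leq _); rewrite -leqNgt subn_gt0; exact.
have := congr1 (coefp T) (ag 'X ('X^N)); rewrite /= coefD comp_polyXr.
rewrite [g`_T]nth_default; last first.
  exact: leq_trans (leq_pmulr N i_gt0) (leq_addl _ _).
rewrite coef_comp_poly_Xn ?(leq_ltn_trans _ lt_n_g) // (negbTE ndvd_NT) addr0.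
rewrite coef_comp_poly.
under eq_bigr => m _ do rewrite coef_XaddXn_exp // subnK ?(ltnW lt_in) //
  (fun_if (GRing.mul _)) mulr0.
rewrite -big_mkcond (big_ord1_eq _ (fun m => g`_m * 'C(m, i)%:R)) lt_n_g.
by move/eqP; rewrite mulf_eq0 (negbTE gn_neq0) => /eqP.
Qed.

Lemma comp_poly_monomial g (x : k) m :
  g \Po (x *: 'X^m) = \sum_(n < size g) (g`_n * x ^+ n) *: 'X^(m * n).
Proof.
by rewrite comp_polyE; apply: eq_bigr => n _; rewrite exprZn -exprM scalerA.
Qed.

Lemma additive_part_comp_monomial g (x : k) m : additive_poly g ->
  additive_part (g \Po (x *: 'X^m)) =
    if additive_exp k m then g \Po (x *: 'X^m) else 0.
Proof.
move=> ag; rewrite comp_poly_monomial raddf_sum.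
have term n : additive_part ((g`_n * x ^+ n) *: 'X^(m * n)) =
    if additive_exp k m then (g`_n * x ^+ n) *: 'X^(m * n) else 0.
  rewrite additive_part_monomial.
  have [->|gn_neq0] := eqVneq g`_n 0; first by rewrite mul0r scale0r !if_same.
  by rewrite additive_expMl // (additive_poly_exp ag gn_neq0).
under eq_bigr do rewrite /= term.
by case: ifP => // _; rewrite big1.
Qed.

Lemma additive_poly_comp_additive_part g c : additive_poly g ->
  g \Po additive_part c = additive_part (g \Po c).
Proof.
move=> ag; rewrite -[c in LHS]coefK -[c in RHS]coefK !poly_def raddf_sum.
rewrite !(big_morph (fun p => g \Po p) ag (additive_poly0 ag)) raddf_sum.
apply: eq_bigr => m _ /=.
rewrite additive_part_monomial additive_part_comp_monomial //.
by case: ifP => // _; rewrite additive_poly0.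
Qed.

End AdditivePolynomial.
Arguments additive_poly {k} g.

Lemma add_morph_zmod_morphism {U V : zmodType} {f : U -> V} :
  {morph f : x y / x + y} -> zmod_morphism f.
Proof. by move=> fD x y; rewrite -[in f x](subrK y x) [f (_ + y)]fD addrK. Qed.

Section Functors.
Variable k : fieldType.
Local Notation kX := ({poly k} : comAlgType k).

HB.instance Definition _ (H : kFunctor k) (A B : comAlgType k)
    (f : {lrmorphism A -> B}) :=
  GRing.isZmodMorphism.Build _ _ (fmap H f)
    (add_morph_zmod_morphism (fmapD _ H _ _ f)).

HB.instance Definition _ (F G : kFunctor k) (p : natTrans F G)
    (A : comAlgType k) :=
  GRing.isZmodMorphism.Build _ _ (p A) (add_morph_zmod_morphism (ntD _ _ p A)).

Lemma fmap_ev_comp (H : kFunctor k) (A B : comAlgType k)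
    (f : {lrmorphism A -> B}) (a : A) (x : fobj H kX) :
  fmap H f (fmap H (ev a) x) = fmap H (ev (f a)) x.
Proof. by symmetry; apply: fmap_comp => p; rewrite rmorph_ev. Qed.

(* By Yoneda, the primitive elements of [H k[X]] are the images of [X] under
   the morphisms [G_a -> H]. *)
Definition primitive {H : kFunctor k} (w : fobj H kX) : Prop :=
  forall (A : comAlgType k) (a b : A),
    fmap H (ev (a + b)) w = fmap H (ev a) w + fmap H (ev b) w.

Lemma primitive_ev0 (H : kFunctor k) (w : fobj H kX) (A : comAlgType k) :
  primitive w -> fmap H (ev (0 : A)) w = 0.
Proof.
move=> pw; apply: (addrI (fmap H (ev (0 : A)) w)).
by rewrite -pw !addr0.
Qed.

Lemma primitive_sum (H : kFunctor k) m (w : 'I_m -> fobj H kX) :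
  (forall i, primitive (w i)) -> primitive (\sum_(i < m) w i).
Proof.
move=> pw A a b; rewrite !raddf_sum -big_split /=.
by apply: eq_bigr => i _; rewrite pw.
Qed.

Lemma primitive_nt (F G : kFunctor k) (p : natTrans F G) (w : fobj F kX) :
  primitive w -> primitive (p kX w).
Proof. by move=> pw A a b; rewrite -!nt_nat pw raddfD. Qed.

Lemma primitive_fmap_additive_part (H : kFunctor k) (w : fobj H kX)
    (c : {poly k}) :
  primitive w -> primitive (fmap H (ev (additive_part c : kX)) w).
Proof.
move=> pw A a b; rewrite !fmap_ev_comp -pw.
by congr (fmap H (ev _) w); apply: ev_additive_partD.
Qed.

End Functors.
Arguments primitive {k H} w.

(* Coordinates identifying [H] with [G_a^alpha]: [coord j x] is the [j]-th
   coordinate of [x], [in_dim] is the set of indices below [alpha], and [gen i]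
   is the point of [H k[X]] whose [i]-th coordinate is [X] and all others 0. *)
Record coordinates {k : fieldType} (H : kFunctor k) := Coordinates {
  in_dim : pred nat;
  coord : forall A : comAlgType k, nat -> fobj H A -> A;
  coord_bound : forall A : comAlgType k, fobj H A -> nat;
  gen : nat -> fobj H ({poly k} : comAlgType k);
  coordD : forall A j, {morph coord A j : x y / x + y};
  coord_fmap : forall (A B : comAlgType k) (f : {lrmorphism A -> B}) j x,
    coord B j (fmap H f x) = f (coord A j x);
  coord_ge_bound : forall A j x, (coord_bound A x <= j)%N -> coord A j x = 0;
  coord_notin_dim : forall A j x, ~~ in_dim j -> coord A j x = 0;
  coord_inj : forall A x y, (forall j, coord A j x = coord A j y) -> x = y;
  coord_gen : forall i j,
    coord _ j (gen i) = if (i == j) && in_dim i then 'X else 0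
}.
Arguments in_dim {k H} c j.
Arguments coord {k H} c {A} j x.
Arguments coord_bound {k H} c {A} x.
Arguments gen {k H} c i.
Arguments coordD {k H} c A j.
Arguments coord_fmap {k H} c {A B} f j x.
Arguments coord_ge_bound {k H} c {A j x}.
Arguments coord_notin_dim {k H} c {A j} x.
Arguments coord_inj {k H} c {A x y}.
Arguments coord_gen {k H} c i j.

Section CoordinateTheory.
Variables (k : fieldType) (H : kFunctor k) (c : coordinates H).
Local Notation kX := ({poly k} : comAlgType k).

HB.instance Definition _ (A : comAlgType k) j :=
  GRing.isZmodMorphism.Build _ _ (@coord k H c A j)
    (add_morph_zmod_morphism (coordD c A j)).

Lemma coord_fmap_ev_gen (A : comAlgType k) (a : A) i j :
  coord c j (fmap H (ev a) (gen c i)) = if (i == j) && in_dim c i then a else 0.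
Proof.
by rewrite coord_fmap coord_gen; case: ifP => _; [exact: evX | exact: rmorph0].
Qed.

Lemma coord_expansion (A : comAlgType k) (x : fobj H A) N :
  (coord_bound c x <= N)%N ->
  x = \sum_(j < N) fmap H (ev (coord c j x)) (gen c j).
Proof.
move=> le_xN; apply: (coord_inj c) => l; rewrite raddf_sum /=.
under eq_bigr => j _ do rewrite coord_fmap_ev_gen.
rewrite -big_mkcond (eq_bigl (fun j : 'I_N => in_dim c j && (j == l :> nat))).
  rewrite (big_ord1_cond_eq _ (fun j => coord c j x)).
  case: ltnP => [_|le_Nl] /=.
    by case: (boolP (in_dim c l)) => // /(coord_notin_dim c x).
  exact: coord_ge_bound (leq_trans le_xN le_Nl).
by move=> j; rewrite andbC.
Qed.

Lemma gen_primitive i : primitive (gen c i).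
Proof.
move=> A a b; apply: (coord_inj c) => l.
by rewrite raddfD /= !coord_fmap_ev_gen; case: ifP; rewrite ?addr0.
Qed.

Lemma coord_primitive (w : fobj H kX) j :
  primitive w -> additive_poly (coord c j w).
Proof. by move=> pw p q; rewrite -!ev_comp_poly -!coord_fmap pw raddfD. Qed.

Definition primitive_part (x : fobj H kX) : fobj H kX :=
  \sum_(i < coord_bound c x)
    fmap H (ev (additive_part (coord c i x) : kX)) (gen c i).

Lemma primitive_part_primitive x : primitive (primitive_part x).
Proof.
apply: primitive_sum => i; apply: primitive_fmap_additive_part.
exact: gen_primitive.
Qed.

End CoordinateTheory.
Arguments primitive_part {k H} c x.
Arguments coord_expansion {k H} c {A x N}.
Arguments gen_primitive {k H} c i.
Arguments coord_primitive {k H} c {w} j.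
Arguments primitive_part_primitive {k H} c x.

Lemma coord_nt_primitive_part (k : fieldType) (F G : kFunctor k)
    (cF : coordinates F) (cG : coordinates G) (p : natTrans F G)
    (x : fobj F ({poly k} : comAlgType k)) j :
  coord cG j (p _ (primitive_part cF x)) = additive_part (coord cG j (p _ x)).
Proof.
rewrite {2}(coord_expansion cF (leqnn (coord_bound cF x))) /primitive_part.
rewrite !raddf_sum /=; apply: eq_bigr => i _ /=.
rewrite !nt_nat !coord_fmap /= !ev_comp_poly.
apply: additive_poly_comp_additive_part; apply: coord_primitive.
by apply: primitive_nt; apply: gen_primitive.
Qed.

Section Splitting.
Variables (k : fieldType) (F G : kFunctor k).
Variables (cF : coordinates F) (cG : coordinates G) (pi : natTrans F G).
Hypothesis pi_epi : epimorphism pi.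
Local Notation kX := ({poly k} : comAlgType k).

Lemma gen_preimage j : exists x, pi kX x == gen cG j.
Proof. by have [x pix] := pi_epi kX (gen cG j); exists x; apply/eqP. Qed.

Definition primitive_lift j : fobj F kX :=
  primitive_part cF (xchoose (gen_preimage j)).

Lemma pi_primitive_lift j : pi kX (primitive_lift j) = gen cG j.
Proof.
apply: (coord_inj cG) => l.
rewrite coord_nt_primitive_part (eqP (xchooseP (gen_preimage j))) coord_gen.
by case: ifP => _; [exact: additive_partX | exact: raddf0].
Qed.

Definition section_map {A : comAlgType k} (y : fobj G A) : fobj F A :=
  \sum_(j < coord_bound cG y) fmap F (ev (coord cG j y)) (primitive_lift j).

Lemma section_map_wide (A : comAlgType k) (y : fobj G A) N :
  (coord_bound cG y <= N)%N ->
  section_map y = \sum_(j < N) fmap F (ev (coord cG j y)) (primitive_lift j).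
Proof.
move=> le_yN; rewrite /section_map.
rewrite (big_ord_widen N
  (fun j => fmap F (ev (coord cG j y)) (primitive_lift j))) // big_mkcond.
apply: eq_bigr => j _; case: ltnP => // le_y_j.
rewrite (coord_ge_bound cG le_y_j) primitive_ev0 //.
exact: primitive_part_primitive.
Qed.

Lemma section_mapD (A : comAlgType k) (y z : fobj G A) :
  section_map (y + z) = section_map y + section_map z.
Proof.
set N := (coord_bound cG y + coord_bound cG z + coord_bound cG (y + z))%N.
rewrite !(@section_map_wide _ _ N) /N; try lia.
rewrite -big_split; apply: eq_bigr => j _ /=; rewrite raddfD.
exact: primitive_part_primitive.
Qed.

Lemma section_map_nat (A B : comAlgType k) (f : {lrmorphism A -> B})
    (y : fobj G A) :
  section_map (fmap G f y) = fmap F f (section_map y).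
Proof.
set N := (coord_bound cG y + coord_bound cG (fmap G f y))%N.
rewrite !(@section_map_wide _ _ N) /N; try lia.
by rewrite raddf_sum; apply: eq_bigr => j _ /=; rewrite fmap_ev_comp coord_fmap.
Qed.

Definition section_nt : natTrans G F :=
  @NatTrans k G F (@section_map) section_mapD section_map_nat.

Lemma coordinates_splits : splits pi.
Proof.
exists section_nt => A y /=.
rewrite /section_map raddf_sum [RHS](coord_expansion cG (leqnn _)).
by apply: eq_bigr => j _ /=; rewrite nt_nat pi_primitive_lift.
Qed.

End Splitting.

Section GaCoordinates.
Variable k : fieldType.
Local Notation kX := ({poly k} : comAlgType k).

Definition coordinates_GaFin n : coordinates (GaFin k n).
Proof.
refine (@Coordinates k (GaFin k n) (fun j => j < n)%N
  (fun A j (x : 'rV[A]_n) => if insub j is Some i then x 0 i else 0)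
  (fun A _ => n)
  (fun i => \row_(l < n) (if (l : nat) == i then 'X : kX else 0))
  _ _ _ _ _ _).
- by move=> A j x y; case: insubP => [i _ _|_]; rewrite ?mxE ?addr0.
- by move=> A B f j x; case: insubP => [i _ _|_]; rewrite ?mxE ?rmorph0.
- by move=> A j x le_nj; case: insubP => // i; rewrite ltnNge le_nj.
- by move=> A j x /negbTE ge_nj; case: insubP => // i; rewrite ge_nj.
- move=> A x y eq_xy; apply/matrixP => i l; rewrite ord1.
  by have := eq_xy l; rewrite valK.
- move=> i j; case: insubP => [l _ <-|ge_nj].
    by rewrite mxE eq_sym; case: eqP => [->|//]; rewrite ltn_ord.
  by case: eqP => // ->; rewrite (negbTE ge_nj).
Defined.

Definition coordinates_GaInf : coordinates (GaInf k).
Proof.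
refine (@Coordinates k (GaInf k) predT (fun A j (p : {poly A}) => p`_j)
  (fun A p => size p) (fun i => ('X : kX) *: 'X^i) _ _ _ _ _ _).
- by move=> A j p q; rewrite coefD.
- by move=> A B f j p; rewrite /= coef_map.
- by move=> A j p; apply: nth_default.
- by [].
- by move=> A p q /polyP.
- move=> i j; rewrite coefZ coefXn /= andbT eq_sym.
  by case: (i == j); rewrite ?mulr1 ?mulr0.
Defined.

Definition coordinates_Ga alpha : coordinates (Ga k alpha) :=
  match alpha return coordinates (Ga k alpha) with
  | Some n => coordinates_GaFin n
  | None => coordinates_GaInf
  end.

Definition coordinates_iso (F H : kFunctor k) (phi : natTrans F H)
    (psi : natTrans H F) (phiK : forall A, cancel (phi A) (psi A))
    (psiK : forall A, cancel (psi A) (phi A)) (c : coordinates H) :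
  coordinates F.
Proof.
refine (@Coordinates k F (in_dim c) (fun A j x => coord c j (phi A x))
  (fun A x => coord_bound c (phi A x)) (fun i => psi kX (gen c i))
  _ _ _ _ _ _).
- by move=> A j x y; rewrite !raddfD.
- by move=> A B f j x; rewrite nt_nat coord_fmap.
- by move=> A j x; apply: coord_ge_bound.
- by move=> A j x; apply: coord_notin_dim.
- by move=> A x y eq_xy; rewrite -(phiK A x) -(phiK A y) (coord_inj c eq_xy).
- by move=> i j; rewrite psiK coord_gen.
Defined.

Lemma strictly_additive_coordinates (H : kFunctor k) :
  strictly_additive H -> inhabited (coordinates H).
Proof.
case=> alpha [phi [psi [phiK psiK]]]; constructor.
exact: coordinates_iso phiK psiK (coordinates_Ga alpha).
Qed.

End GaCoordinates.

Theorem mainTheorem7 (k : fieldType) (F G : kFunctor k) (pi : natTrans F G) :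
  strictly_additive F -> strictly_additive G -> epimorphism pi -> splits pi.
Proof.
move=> /strictly_additive_coordinates[cF] /strictly_additive_coordinates[cG].
exact: coordinates_splits.
Qed.
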